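(* Let $\tau=\{\tau_1,\dots,\tau_n\}$ with $\tau_i=(T_i,C_i,D_i)$, $0<C_i\le D_i\le T_i$, and assume $\min_{1\le i\le n}(D_i-C_i)>0$. Let $\Pi>0$, and let $m'$ be a positive integer with $$m'\ge\frac{\sum_{i=1}^nC_i}{\min_{1\le i\le n}\{D_i-C_i\}}+n.$$ Then the MPR model $R=\langle\Pi,m'\Pi,m'\rangle$ satisfies $$\mathrm{dem}_k(A_k+D_k,m')\le\mathrm{sbf}_R(A_k+D_k)\quad\text{for all }k\in\{1,\dots,n\}\text{ and all real }A_k\ge0.$$
   Context: MPR model: $R=\langle\Pi,\Theta,m'\rangle$ with $\Pi>0$, $m'$ a positive integer and $0\le\Theta\le m'\Pi$. A supply pattern of $R$ is a piecewise-constant function $s:[0,\infty)\to\{0,\dots,m'\}$ with $\int_{j\Pi}^{(j+1)\Pi}s(t)\,dt=\Theta$ for every integer $j\ge0$. Then $$\mathrm{sbf}_R(t)=\inf\Big\{\int_{t_0}^{t_0+t}s: s\text{ a supply pattern of }R,\ t_0\ge0\Big\}.$$ Demand bound: for $t\ge0$ let $$CI_i(t)=\min\Big\{C_i,\max\Big\{0,\;t-\Big\lfloor\tfrac{t+T_i-D_i}{T_i}\Big\rfloor T_i\Big\}\Big\},\qquad W_i(t)=\Big\lfloor\tfrac{t+T_i-D_i}{T_i}\Big\rfloor C_i+CI_i(t).$$ Fix $k$ and $A\ge0$, and put $t=A+D_k$. For $i\ne k$ define $$\bar I_i=\min\{W_i(t),\,t-C_k\},\qquad \hat I_i=\min\{W_i(t)-CI_i(t),\,t-C_k\},$$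 and for $i=k$ define $$\bar I_k=\min\{W_k(t)-C_k,\,A\},\qquad \hat I_k=\min\{W_k(t)-C_k-CI_k(t),\,A\}.$$ Then $$\mathrm{dem}_k(A+D_k,m')=m'C_k+\sum_{i=1}^n\hat I_i+S,$$ where $S$ is the sum of the $m'-1$ largest values among $\{\bar I_i-\hat I_i\}_{i=1}^n$ (all of them if $n\le m'-1$; $S=0$ if $m'=1$). *)

From Stdlib Require Import Reals Lra List.
From Coquelicot Require Import Coquelicot.
Open Scope R_scope.

Definition rfloor (x : R) : R := IZR (Int_part x).

Definition sumn_R (n : nat) (f : nat -> R) : R :=
  fold_right Rplus 0 (map f (seq 0 n)).

(* min over indices 0..n-1 (meaningful for n >= 1) *)
Definition minn_R (n : nat) (f : nat -> R) : R :=
  fold_right Rmin (f 0%nat) (map f (seq 1 (n - 1))).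

Definition piecewise_constant (s : R -> R) : Prop :=
  forall b, 0 < b -> exists l : list R,
    forall x y, 0 <= x -> x <= y -> y <= b ->
      (forall p, In p l -> ~ (x <= p <= y)) -> s x = s y.

Definition supply_pattern (Pi Theta : R) (m : nat) (s : R -> R) : Prop :=
  piecewise_constant s /\
  (forall t, 0 <= t -> exists v : nat, (v <= m)%nat /\ s t = INR v) /\
  (forall j : nat, RInt s (INR j * Pi) (INR (S j) * Pi) = Theta).

Definition sbf (Pi Theta : R) (m : nat) (t : R) : Rbar :=
  Glb_Rbar (fun x => exists s t0, supply_pattern Pi Theta m s /\ 0 <= t0 /\
                                  x = RInt s t0 (t0 + t)).

Section Demand.
Variables (T C D : nat -> R).

Definition CI (i : nat) (t : R) : R :=
  Rmin (C i) (Rmax 0 (t - rfloor ((t + T i - D i) / T i) * T i)).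

Definition W (i : nat) (t : R) : R :=
  rfloor ((t + T i - D i) / T i) * C i + CI i t.

Definition Ibar (k : nat) (A : R) (i : nat) : R :=
  let t := A + D k in
  if Nat.eq_dec i k then Rmin (W k t - C k) A
  else Rmin (W i t) (t - C k).

Definition Ihat (k : nat) (A : R) (i : nat) : R :=
  let t := A + D k in
  if Nat.eq_dec i k then Rmin (W k t - C k - CI k t) A
  else Rmin (W i t - CI i t) (t - C k).

Fixpoint insert_desc (x : R) (l : list R) : list R :=
  match l with
  | nil => x :: nil
  | y :: l' => if Rle_dec y x then x :: y :: l' else y :: insert_desc x l'
  end.
Fixpoint sort_desc (l : list R) : list R :=
  match l with nil => nil | x :: l' => insert_desc x (sort_desc l') end.

(* sum of the (m-1) largest values among the list (all if fewer; 0 if m = 1) *)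
Definition sum_largest (q : nat) (l : list R) : R :=
  fold_right Rplus 0 (firstn q (sort_desc l)).

(* dem_k(A + D_k, m), tasks indexed 0..n-1 *)
Definition dem (n k : nat) (A : R) (m : nat) : R :=
  INR m * C k + sumn_R n (Ihat k A)
  + sum_largest (m - 1) (map (fun i => Ibar k A i - Ihat k A i) (seq 0 n)).
End Demand.

(** A supply pattern of [<Pi, m Pi, m>] is bounded by [m] and integrates to
    [m Pi] over every period, so it equals [m] almost everywhere: any window of
    length [t] receives supply at least [m t], i.e. [sbf t >= m t].  On the
    demand side every [Ibar_i] is at most [t - C_k] and [Ihat_i <= Ibar_i], so
    [dem <= m C_k + n (t - C_k) <= m t] as soon as [n <= m], which the
    hypothesis on [m] guarantees. *)

From Stdlib Require Import Reals List Permutation Lra Lia.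
From Coquelicot Require Import Coquelicot.
Open Scope R_scope.

Local Notation sum_R l := (fold_right Rplus 0 l).

Lemma sum_R_Permutation (l l' : list R) : Permutation l l' -> sum_R l = sum_R l'.
Proof. induction 1; simpl; lra. Qed.

Lemma sum_R_firstn_le (q : nat) (l : list R) :
  List.Forall (fun x => 0 <= x) l -> sum_R (firstn q l) <= sum_R l.
Proof.
  revert q; induction l as [|x l IH]; intros [|q] Hl; simpl; try lra;
    inversion Hl as [|? ? Hx Hl']; subst.
  - pose proof (IH 0%nat Hl'); simpl in *; lra.
  - pose proof (IH q Hl'); lra.
Qed.

Lemma sum_R_map_plus {I : Type} (f g : I -> R) (l : list I) :
  sum_R (map (fun i => f i + g i) l) = sum_R (map f l) + sum_R (map g l).
Proof. induction l as [|i l IH]; simpl; lra. Qed.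

Lemma sum_R_map_le {I : Type} (f g : I -> R) (l : list I) :
  (forall i, In i l -> f i <= g i) -> sum_R (map f l) <= sum_R (map g l).
Proof.
  induction l as [|i l IH]; intros Hfg; simpl; [lra|].
  pose proof (Hfg i (or_introl eq_refl)).
  pose proof (IH (fun j Hj => Hfg j (or_intror Hj))); lra.
Qed.

Lemma sum_R_map_const {I : Type} (c : R) (l : list I) :
  sum_R (map (fun _ => c) l) = INR (length l) * c.
Proof.
  induction l as [|i l IH]; [simpl; lra|].
  cbn [map fold_right length]; rewrite S_INR, IH; lra.
Qed.

Lemma sumn_R_nonneg (n : nat) (f : nat -> R) :
  (forall i, (i < n)%nat -> 0 <= f i) -> 0 <= sumn_R n f.
Proof.
  intros Hf; apply Rle_trans with (sum_R (map (fun _ : nat => 0) (seq 0 n))).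
  - rewrite sum_R_map_const; lra.
  - apply sum_R_map_le; intros i Hi; apply in_seq in Hi; apply Hf; lia.
Qed.

Lemma Permutation_insert_desc (x : R) (l : list R) :
  Permutation (insert_desc x l) (x :: l).
Proof.
  induction l as [|y l IH]; simpl; [reflexivity|].
  destruct (Rle_dec y x); [reflexivity|].
  rewrite IH; apply perm_swap.
Qed.

Lemma Permutation_sort_desc (l : list R) : Permutation (sort_desc l) l.
Proof.
  induction l as [|x l IH]; simpl; [reflexivity|].
  rewrite Permutation_insert_desc, IH; reflexivity.
Qed.

Lemma sum_largest_le_sum (q : nat) (l : list R) :
  List.Forall (fun x => 0 <= x) l -> sum_largest q l <= sum_R l.
Proof.
  intros Hl; unfold sum_largest.
  rewrite <- (sum_R_Permutation _ _ (Permutation_sort_desc l)).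
  apply sum_R_firstn_le.
  exact (Permutation_Forall (Permutation_sym (Permutation_sort_desc l)) Hl).
Qed.

Section DemandBound.
Variables (T C D : nat -> R) (k : nat) (A : R).

Lemma CI_nonneg (i : nat) (t : R) : 0 <= C i -> 0 <= CI T C D i t.
Proof. intros HC; unfold CI; apply Rmin_glb; [lra | apply Rmax_l]. Qed.

Lemma Ihat_le_Ibar (i : nat) : 0 <= C i -> Ihat T C D k A i <= Ibar T C D k A i.
Proof.
  intros HC; pose proof (CI_nonneg i (A + D k) HC).
  unfold Ihat, Ibar; cbv zeta; destruct Nat.eq_dec as [->|_]; apply Rle_min_compat_r; lra.
Qed.

Lemma Ibar_le_window (i : nat) :
  0 <= A -> C k <= D k -> Ibar T C D k A i <= A + D k - C k.
Proof.
  intros HA HCD; unfold Ibar; cbv zeta; destruct Nat.eq_dec.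
  - pose proof (Rmin_r (W T C D k (A + D k) - C k) A); lra.
  - apply Rmin_r.
Qed.

Lemma dem_le_full_supply (n m : nat) :
  (n <= m)%nat -> 0 <= A -> C k <= D k ->
  (forall i, (i < n)%nat -> 0 <= C i) ->
  dem T C D n k A m <= INR m * (A + D k).
Proof.
  intros Hnm HA HCD HC; unfold dem, sumn_R.
  set (Ihat_k := Ihat T C D k A); set (Ibar_k := Ibar T C D k A).
  assert (Hgap : forall i, In i (seq 0 n) -> 0 <= Ibar_k i - Ihat_k i).
  { intros i Hi; apply in_seq in Hi.
    pose proof (Ihat_le_Ibar i (HC i ltac:(lia))); unfold Ihat_k, Ibar_k; lra. }
  assert (Hlargest :
    sum_largest (m - 1) (map (fun i => Ibar_k i - Ihat_k i) (seq 0 n))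
      <= sum_R (map (fun i => Ibar_k i - Ihat_k i) (seq 0 n))).
  { apply sum_largest_le_sum, List.Forall_forall.
    intros x Hx; apply in_map_iff in Hx as [i [<- Hi]]; auto. }
  assert (Hwindow :
    sum_R (map (fun i => Ihat_k i + (Ibar_k i - Ihat_k i)) (seq 0 n))
      <= INR n * (A + D k - C k)).
  { rewrite <- (length_seq n 0) at 2; rewrite <- sum_R_map_const.
    apply sum_R_map_le; intros i _.
    pose proof (Ibar_le_window i HA HCD); unfold Ibar_k in *; lra. }
  rewrite sum_R_map_plus in Hwindow.
  assert (INR n * (A + D k - C k) <= INR m * (A + D k - C k))
    by (apply Rmult_le_compat_r; [lra | apply le_INR; exact Hnm]).
  lra.
Qed.

End DemandBound.

(* The hypothesis only concerns the open interval, so that splitting at a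
   breakpoint [p] removes [p] from both halves. *)
Lemma ex_RInt_breakpoints (s : R -> R) (L : list R) :
  forall a b, a <= b ->
  (forall x y, a < x -> x <= y -> y < b ->
     (forall p, In p L -> ~ (x <= p <= y)) -> s x = s y) ->
  ex_RInt s a b.
Proof.
  induction L as [|p L IH]; intros a b Hab Hs.
  - destruct (Req_dec a b) as [<-|Hne]; [apply ex_RInt_point|].
    apply (ex_RInt_ext (fun _ => s ((a + b) / 2))); [|apply ex_RInt_const].
    intros x Hx; rewrite Rmin_left, Rmax_right in Hx by lra.
    destruct (Rle_dec x ((a + b) / 2));
      [symmetry|]; apply Hs; simpl; tauto || lra.
  - assert (Hsub : forall a' b', a <= a' -> a' <= b' -> b' <= b ->
                     ~ (a' < p < b') -> ex_RInt s a' b').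
    { intros a' b' Ha' Hab' Hb' Hp; apply IH; [lra|].
      intros x y Hx Hxy Hy HL; apply Hs; try lra.
      intros q [<-|Hq]; [lra | exact (HL q Hq)]. }
    destruct (Rlt_dec a p), (Rlt_dec p b);
      [apply ex_RInt_Chasles with p; apply Hsub; lra | apply Hsub; lra ..].
Qed.

Lemma ex_RInt_piecewise_constant (s : R -> R) (a b : R) :
  piecewise_constant s -> 0 <= a -> a <= b -> ex_RInt s a b.
Proof.
  intros Hpc Ha Hab.
  destruct (Rle_lt_dec b 0) as [Hb|Hb].
  { replace b with a by lra; apply ex_RInt_point. }
  destruct (Hpc b Hb) as [L HL].
  apply (ex_RInt_breakpoints s L a b Hab).
  intros x y Hx Hxy Hy; apply HL; lra.
Qed.

Lemma RInt_le_const (f : R -> R) (a b c : R) :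
  a <= b -> ex_RInt f a b -> (forall x, a < x < b -> f x <= c) ->
  RInt f a b <= c * (b - a).
Proof.
  intros Hab Hf Hc.
  replace (c * (b - a)) with (RInt (fun _ => c) a b)
    by (rewrite RInt_const; unfold scal; simpl; unfold mult; simpl; ring).
  apply RInt_le; auto using ex_RInt_const.
Qed.

Lemma RInt_ge_of_saturated (f : R -> R) (a b b' d c : R) :
  a <= b -> b <= b' -> b' <= d -> ex_RInt f a d ->
  (forall x, a < x < d -> f x <= c) -> RInt f a d = c * (d - a) ->
  c * (b' - b) <= RInt f b b'.
Proof.
  intros Hab Hbb' Hb'd Hf Hc Hsat.
  pose proof (ex_RInt_Chasles_1 f a b' d ltac:(lra) Hf) as Hf_ab'.
  pose proof (ex_RInt_Chasles_2 f a b' d ltac:(lra) Hf) as Hf_b'd.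
  pose proof (ex_RInt_Chasles_1 f a b b' ltac:(lra) Hf_ab') as Hf_ab.
  pose proof (ex_RInt_Chasles_2 f a b b' ltac:(lra) Hf_ab') as Hf_bb'.
  pose proof (RInt_le_const f a b c Hab Hf_ab ltac:(intros; apply Hc; lra)).
  pose proof (RInt_le_const f b' d c Hb'd Hf_b'd ltac:(intros; apply Hc; lra)).
  rewrite <- (RInt_Chasles f a b' d), <- (RInt_Chasles f a b b') in Hsat by assumption.
  unfold plus in Hsat; simpl in Hsat; nra.
Qed.

Lemma RInt_supply_periods (Pi Theta : R) (m : nat) (s : R -> R) (j : nat) :
  0 < Pi -> supply_pattern Pi Theta m s ->
  RInt s 0 (INR j * Pi) = INR j * Theta.
Proof.
  intros HPi [Hpc [_ Hperiod]].
  induction j as [|j IH].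
  { simpl; rewrite Rmult_0_l, RInt_point; unfold zero; simpl; ring. }
  pose proof (pos_INR j).
  rewrite <- (RInt_Chasles s 0 (INR j * Pi)), IH, Hperiod.
  - rewrite S_INR; unfold plus; simpl; ring.
  - apply ex_RInt_piecewise_constant; auto; lra || nra.
  - apply ex_RInt_piecewise_constant; auto; rewrite ?S_INR; nra.
Qed.

Lemma supply_window_ge (Pi : R) (m : nat) (s : R -> R) (t0 t : R) :
  0 < Pi -> supply_pattern Pi (INR m * Pi) m s -> 0 <= t0 -> 0 <= t ->
  INR m * t <= RInt s t0 (t0 + t).
Proof.
  intros HPi Hs Ht0 Ht.
  pose proof Hs as [Hpc [Hval _]].
  destruct (INR_unbounded ((t0 + t) / Pi)) as [N HN].
  assert (HNPi : t0 + t <= INR N * Pi).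
  { apply Rlt_le; apply (Rmult_lt_compat_r Pi) in HN; auto.
    field_simplify in HN; lra. }
  assert (Hsat : RInt s 0 (INR N * Pi) = INR m * (INR N * Pi - 0))
    by (rewrite (RInt_supply_periods Pi (INR m * Pi) m s N HPi Hs); simpl; ring).
  replace (INR m * t) with (INR m * ((t0 + t) - t0)) by ring.
  apply (RInt_ge_of_saturated s 0 _ _ (INR N * Pi)); try lra.
  - apply ex_RInt_piecewise_constant; auto; lra.
  - intros x Hx; destruct (Hval x ltac:(lra)) as [v [Hvm ->]]; apply le_INR, Hvm.
Qed.

Lemma sbf_full_ge (Pi : R) (m : nat) (t : R) :
  0 < Pi -> 0 <= t -> Rbar_le (INR m * t) (sbf Pi (INR m * Pi) m t).
Proof.
  intros HPi Ht; apply (proj2 (Glb_Rbar_correct _)).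
  intros x [s [t0 [Hs [Ht0 ->]]]].
  exact (supply_window_ge Pi m s t0 t HPi Hs Ht0 Ht).
Qed.

Theorem lemma3 (n : nat) (T C D : nat -> R) (Pi : R) (m : nat) :
  (0 < n)%nat ->
  (forall i, (i < n)%nat -> 0 < C i /\ C i <= D i /\ D i <= T i) ->
  0 < minn_R n (fun i => D i - C i) ->
  0 < Pi ->
  (0 < m)%nat ->
  INR m >= sumn_R n C / minn_R n (fun i => D i - C i) + INR n ->
  forall k (A : R), (k < n)%nat -> 0 <= A ->
    Rbar_le (Finite (dem T C D n k A m)) (sbf Pi (INR m * Pi) m (A + D k)).
Proof.
  intros _ HC Hmin HPi _ Hm k A Hk HA.
  assert (HC_nonneg : forall i, (i < n)%nat -> 0 <= C i)
    by (intros i Hi; destruct (HC i Hi); lra).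
  assert (Hnm : (n <= m)%nat).
  { pose proof (Rdiv_le_0_compat _ _ (sumn_R_nonneg n C HC_nonneg) Hmin).
    apply INR_le; lra. }
  destruct (HC k Hk) as [HCk [HCD _]].
  apply Rbar_le_trans with (INR m * (A + D k)).
  - exact (dem_le_full_supply T C D k A n m Hnm HA HCD HC_nonneg).
  - apply sbf_full_ge; lra.
Qed.
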